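(* Let $\mathbb T=(V,E,o)$ be a locally finite rooted tree (edges directed away from the root) with rates satisfying a flow rule for a flow of strength $q>0$, and assume that particles are generated at the root at rate $\lambda=\rho q$ for some $\rho\in(0,1)$. Then the Bernoulli-$\rho$ product measure $\nu_\rho$ on $\{0,1\}^V$ is an invariant measure for the TASEP $(\eta_t)_{t\ge0}$ on $\mathbb T$, i.e. $\int\mathcal Lf\,d\nu_\rho=0$ for all cylinder functions $f$.
   Context: The TASEP on $\mathbb T$ with rates $(r_{x,y})_{(x,y)\in E}$ (positive, uniformly bounded above) and reservoir intensity $\lambda$ has generator $\mathcal Lf(\eta)=\lambda(1-\eta(o))[f(\eta^o)-f(\eta)]+\sum_{(x,y)\in E}r_{x,y}\eta(x)(1-\eta(y))[f(\eta^{x,y})-f(\eta)]$, where $\eta^{x,y}$ swaps the values at $x,y$ and $\eta^o$ flips the value at $o$. $r_x:=\sum_{y:(x,y)\in E}r_{x,y}$; $\bar x$ is the parent of $x\ne o$. Flow rule of strength $q$: $r_x-r_{\bar x,x}=0$ for all $x\ne o$ and $r_o=q$. *)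

From Stdlib Require Import Relations.
From mathcomp Require Import all_boot all_order all_algebra.
From mathcomp Require Import boolp classical_sets fsbigop reals.
Set Implicit Arguments. Unset Strict Implicit. Unset Printing Implicit Defensive.
Import Order.TTheory GRing.Theory Num.Theory.
Local Open Scope classical_set_scope.
Local Open Scope ring_scope.

Definition config (V : Type) := V -> bool.

Definition is_rooted_tree (V : Type) (E : V -> V -> Prop) (o : V) : Prop :=
  (forall x, ~ E x o) /\
  (forall y, y <> o -> exists! x, E x y) /\
  (forall y, clos_refl_trans V E o y).

(* Locally finite: every vertex has finitely many children
   (it has at most one parent by the tree property). *)
Definition locally_finite (V : eqType) (E : V -> V -> Prop) : Prop :=
  forall x, exists s : seq V, forall y, E x y -> y \in s.

Definition out_rate (R : realType) (V : choiceType) (E : V -> V -> Prop)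
  (r : V -> V -> R) (x : V) : R :=
  \sum_(y \in [set y | E x y]) r x y.

Definition flow_rule (R : realType) (V : choiceType) (E : V -> V -> Prop)
  (o : V) (r : V -> V -> R) (q : R) : Prop :=
  (forall x y, E y x -> out_rate E r x = r y x) /\ out_rate E r o = q.

Definition swap_cfg (V : eqType) (x y : V) (eta : config V) : config V :=
  fun z => if z == x then eta y else if z == y then eta x else eta z.

Definition flip_cfg (V : eqType) (o : V) (eta : config V) : config V :=
  fun z => if z == o then ~~ eta o else eta z.

Definition b2R (R : realType) (b : bool) : R := (b : nat)%:R.

(* The sum over the edge set is the (finitely supported)
   sum over edges of the nonzero terms; for cylinder functions on a locally
   finite tree only finitely many terms are nonzero. *)
Definition tasep_gen (R : realType) (V : choiceType) (E : V -> V -> Prop)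
  (o : V) (r : V -> V -> R) (lam : R) (f : config V -> R) (eta : config V) : R :=
  lam * (1 - b2R R (eta o)) * (f (flip_cfg o eta) - f eta)
  + \sum_(e \in [set e : V * V | E e.1 e.2])
      (r e.1 e.2 * b2R R (eta e.1) * (1 - b2R R (eta e.2))
        * (f (swap_cfg e.1 e.2 eta) - f eta)).

Definition depends_only_on (V : eqType) (R : Type) (S : seq V)
  (g : config V -> R) : Prop :=
  forall eta eta', (forall v, v \in S -> eta v = eta' v) -> g eta = g eta'.

Definition cylinder (V : eqType) (R : Type) (g : config V -> R) : Prop :=
  exists S : seq V, depends_only_on S g.

(* the configuration equal to t on S (listed without repetition) and 0 elsewhere *)
Definition ext_cfg (V : eqType) (S : seq V) (t : (size S).-tuple bool) : config V :=
  fun v => if v \in S then nth false t (index v S) else false.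

(* Integral against the Bernoulli-rho product measure nu_rho of a function
   depending only on the coordinates in the duplicate-free list S:
   the sum over the 2^|S| patterns on S weighted by their nu_rho-probability
   (nu_rho is, by definition, the measure with these finite-dim. marginals). *)
Definition bern_int (R : realType) (V : eqType) (rho : R) (S : seq V)
  (g : config V -> R) : R :=
  \sum_(t : (size S).-tuple bool)
     (\prod_(i < size S) (if tnth t i then rho else 1 - rho)) * g (ext_cfg t).

From Stdlib Require Import Relations.
From mathcomp Require Import all_boot all_order all_algebra.
From mathcomp Require Import boolp classical_sets fsbigop reals.
From mathcomp Require Import ring.
Set Implicit Arguments. Unset Strict Implicit. Unset Printing Implicit Defensive.
Import Order.TTheory GRing.Theory Num.Theory.
Local Open Scope ring_scope.

(* Integrate out the coordinates one at a time against Bernoulli(rho).  At o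
   this turns the creation term into q (eta(o) - rho) f; at x and y it turns the
   jump term along (x,y) into r_{x,y} (eta(y) - eta(x)) f, because exchanging
   the values at x and y preserves the product measure.  With phi(v) the
   integral of (eta(v) - rho) f, which vanishes when f does not depend on v, the
   integral of L f is q phi(o) + sum_{(x,y)} r_{x,y} (phi(y) - phi(x)).
   Regrouped by vertex, the flow rule makes inflow minus outflow equal to -q at
   o and 0 elsewhere, so the sum is -q phi(o) and everything cancels. *)

Section BernoulliAverage.
Variables (R : realType) (V : eqType) (rho : R).

Definition set_cfg (eta : config V) (x : V) (b : bool) : config V :=
  fun v => if v == x then b else eta v.

Definition avg_at (x : V) (F : config V -> R) : config V -> R :=
  fun eta => rho * F (set_cfg eta x true) + (1 - rho) * F (set_cfg eta x false).

(* [avg_on L F] is the conditional expectation of [F] under the product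
   measure, given the coordinates outside [L]. *)
Fixpoint avg_on (L : seq V) (F : config V -> R) : config V -> R :=
  if L is x :: L' then avg_on L' (avg_at x F) else F.

Definition free_of (x : V) (F : config V -> R) : Prop :=
  forall eta b, F (set_cfg eta x b) = F eta.

Lemma set_cfg_at eta x b : set_cfg eta x b x = b.
Proof. by rewrite /set_cfg eqxx. Qed.

Lemma set_cfg_other eta x y b : y != x -> set_cfg eta x b y = eta y.
Proof. by rewrite /set_cfg => /negbTE->. Qed.

Lemma set_cfgC eta x y b c :
  x != y -> set_cfg (set_cfg eta x b) y c = set_cfg (set_cfg eta y c) x b.
Proof.
move=> nxy; apply: funext => v; rewrite /set_cfg.
by case: eqP => [->|//]; rewrite eq_sym (negbTE nxy).
Qed.

Lemma set_cfg_set_cfg eta x b c : set_cfg (set_cfg eta x b) x c = set_cfg eta x c.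
Proof. by apply: funext => v; rewrite /set_cfg; case: (v == x). Qed.

Lemma avg_atC x y F : avg_at x (avg_at y F) = avg_at y (avg_at x F).
Proof.
have [->//|nxy] := eqVneq x y; apply: funext => eta; rewrite /avg_at.
rewrite !(set_cfgC _ _ _ nxy); ring.
Qed.

Lemma avg_at_free x F : free_of x F -> avg_at x F = F.
Proof. by move=> Fx; apply: funext => eta; rewrite /avg_at !Fx; ring. Qed.

Lemma free_of_avg_at x F : free_of x (avg_at x F).
Proof. by move=> eta b; rewrite /avg_at !set_cfg_set_cfg. Qed.

Lemma free_of_depends (S : seq V) x F :
  depends_only_on S F -> x \notin S -> free_of x F.
Proof.
move=> FS xS eta b; apply: FS => v vS; apply: set_cfg_other.
by apply: contraNneq xS => <-.
Qed.

Lemma depends_only_on_avg_at (S : seq V) x F :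
  depends_only_on S F -> depends_only_on S (avg_at x F).
Proof.
move=> FS eta eta' eq_eta; rewrite /avg_at.
by congr (_ * _ + _ * _); apply: FS => v vS; rewrite /set_cfg eq_eta.
Qed.

Lemma depends_only_on_avg_on (S L : seq V) F :
  depends_only_on S F -> depends_only_on S (avg_on L F).
Proof.
elim: L F => [//|x L IHL] F FS /=.
exact/IHL/depends_only_on_avg_at.
Qed.

Lemma avg_on_avg_at L x F : avg_on L (avg_at x F) = avg_at x (avg_on L F).
Proof. by elim: L F => [//|y L IHL] F /=; rewrite avg_atC IHL. Qed.

Lemma free_of_avg_on L x F : x \in L -> free_of x (avg_on L F).
Proof.
elim: L F => [//|y L IHL] F; rewrite in_cons => /orP[/eqP->|xL] /=.
  by rewrite avg_on_avg_at; apply: free_of_avg_at.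
exact: IHL.
Qed.

Lemma avg_on_free L F : (forall x, free_of x F) -> avg_on L F = F.
Proof. by move=> Ffree; elim: L => [//|x L IHL] /=; rewrite avg_at_free. Qed.

Lemma avg_onC L1 L2 F : avg_on L1 (avg_on L2 F) = avg_on L2 (avg_on L1 F).
Proof. by elim: L2 F => [//|x L2 IHL] F /=; rewrite IHL avg_on_avg_at. Qed.

Lemma avg_on_avg_at_mem L x F : x \in L -> avg_on L (avg_at x F) = avg_on L F.
Proof.
by move=> xL; rewrite avg_on_avg_at avg_at_free //; apply: free_of_avg_on.
Qed.

Lemma avg_onD L F G :
  avg_on L (fun eta => F eta + G eta) = fun eta => avg_on L F eta + avg_on L G eta.
Proof.
elim: L F G => [//|x L IHL] F G /=; rewrite -IHL; congr avg_on.
by apply: funext => eta; rewrite /avg_at; ring.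
Qed.

Lemma avg_onB L F G :
  avg_on L (fun eta => F eta - G eta) = fun eta => avg_on L F eta - avg_on L G eta.
Proof.
elim: L F G => [//|x L IHL] F G /=; rewrite -IHL; congr avg_on.
by apply: funext => eta; rewrite /avg_at; ring.
Qed.

Lemma avg_onZ L c F : avg_on L (fun eta => c * F eta) = fun eta => c * avg_on L F eta.
Proof.
elim: L F => [//|x L IHL] F /=; rewrite -IHL; congr avg_on.
by apply: funext => eta; rewrite /avg_at; ring.
Qed.

Lemma avg_on_sum (I : Type) L (s : seq I) (F : I -> config V -> R) :
  avg_on L (fun eta => \sum_(i <- s) F i eta) =
  fun eta => \sum_(i <- s) avg_on L (F i) eta.
Proof.
elim: s => [|i s IHs].
  under eq_fun do rewrite big_nil.
  by rewrite avg_on_free //; apply: funext => eta; rewrite big_nil.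
under eq_fun do rewrite big_cons.
by rewrite avg_onD IHs; under [RHS]eq_fun do rewrite big_cons.
Qed.

Lemma big_tuple_cons n (F : n.+1.-tuple bool -> R) :
  \sum_(t : n.+1.-tuple bool) F t =
  \sum_(b : bool) \sum_(t : n.-tuple bool) F [tuple of b :: t].
Proof.
rewrite pair_bigA /=.
rewrite (reindex (fun p : bool * n.-tuple bool => [tuple of p.1 :: p.2])) //.
exists (fun t : n.+1.-tuple bool => (thead t, [tuple of behead t])).
  by move=> [b t] _ /=; congr pair; apply: val_inj.
by move=> [[|x s] st] _; apply: val_inj.
Qed.

Lemma ext_cfg_cons (s : V) (S : seq V) b (t : (size S).-tuple bool) :
  @ext_cfg V (s :: S) [tuple of b :: t] = set_cfg (ext_cfg t) s b.
Proof.
apply: funext => v; rewrite /ext_cfg /set_cfg in_cons /=.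
by case: (eqVneq v s).
Qed.

Lemma bern_int_avg_on (S : seq V) (g : config V -> R) :
  bern_int rho S g = avg_on S g (fun _ => false).
Proof.
elim: S g => [|s S IHS] g.
  rewrite /bern_int /= (eq_bigl (pred1 [tuple])); last first.
    by move=> t; apply/esym/eqP; rewrite tuple0.
  rewrite big_pred1_eq big_ord0 mul1r.
  by congr g; apply: funext.
rewrite /= -IHS /bern_int /= big_tuple_cons big_bool /=.
rewrite -big_split /=; apply: eq_bigr => t _.
rewrite !big_ord_recl !tnth0 !ext_cfg_cons /avg_at.
have weight_tail b : \prod_(i < size S)
    (if tnth [tuple of b :: t] (lift ord0 i) then rho else 1 - rho) =
  \prod_(i < size S) (if tnth t i then rho else 1 - rho).
  by apply: eq_bigr => i _; rewrite tnthS.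
rewrite !weight_tail; ring.
Qed.

Lemma bern_int_eq0 (S N : seq V) (G : config V -> R) :
  depends_only_on S G -> avg_on N G = (fun _ => 0) -> bern_int rho S G = 0.
Proof.
move=> GS GN0; rewrite bern_int_avg_on.
have free_S x : free_of x (avg_on S G).
  have [xS|xS] := boolP (x \in S); first exact: free_of_avg_on.
  exact/(free_of_depends _ xS)/depends_only_on_avg_on.
by rewrite -(avg_on_free N free_S) avg_onC GN0 avg_on_free.
Qed.

End BernoulliAverage.

Lemma locally_finite_seq (V : eqType) (E : V -> V -> Prop) :
  locally_finite E -> forall S : seq V, exists C : seq V,
    forall x y, x \in S -> E x y -> y \in C.
Proof.
move=> lfE; elim=> [|a S [C hC]]; first by exists [::].
have [Ca hCa] := lfE a; exists (Ca ++ C) => x y.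
rewrite in_cons mem_cat => /orP[/eqP->|xS] exy; first by rewrite hCa.
by rewrite (hC x y xS exy) orbT.
Qed.

Section RootedTree.
Variables (V : eqType) (E : V -> V -> Prop).

Lemma rooted_tree_parents_finite (o : V) :
  is_rooted_tree E o -> locally_finite (fun y x => E x y).
Proof.
move=> [noo [upar _]] y; have [->|nyo] := eqVneq y o.
  by exists [::] => x /noo.
have [p [_ hp]] := upar y (elimN eqP nyo).
by exists [:: p] => x /hp ->; rewrite mem_seq1.
Qed.

Definition edge_enum (S : seq V) (ED : seq (V * V)) : Prop :=
  uniq ED /\ forall e, e \in ED <-> E e.1 e.2 /\ ((e.1 \in S) || (e.2 \in S)).

Lemma exists_edge_enum (o : V) (S : seq V) :
  is_rooted_tree E o -> locally_finite E -> exists ED, edge_enum S ED.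
Proof.
move=> treeE lfE.
have [C hC] := locally_finite_seq lfE S.
have [P hP] := locally_finite_seq (rooted_tree_parents_finite treeE) S.
exists [seq e <- [seq (x, y) | x <- undup (S ++ P), y <- undup (S ++ C)] |
         `[< E e.1 e.2 >] && ((e.1 \in S) || (e.2 \in S))]; split.
  apply/filter_uniq/allpairs_uniq; rewrite ?undup_uniq //.
  by move=> [a b] [c d] _ _ [-> ->].
move=> [x y]; rewrite mem_filter /=; split; first by case/andP=> /andP[/asboolP].
move=> [exy xyS]; rewrite xyS andbT asboolT //=.
apply: allpairs_f; rewrite mem_undup mem_cat; case/orP: xyS => h.
- by rewrite h.
- by rewrite (hP y x h exy) orbT.
- by rewrite (hC x y h exy) orbT.
- by rewrite h.
Qed.

End RootedTree.

Section TasepGenerator.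
Variables (R : realType) (V : choiceType) (E : V -> V -> Prop) (o : V).
Variables (r : V -> V -> R) (lam : R) (f : config V -> R).

Definition creation_term (eta : config V) : R :=
  lam * (1 - b2R R (eta o)) * (f (flip_cfg o eta) - f eta).

Definition jump_term (e : V * V) (eta : config V) : R :=
  r e.1 e.2 * b2R R (eta e.1) * (1 - b2R R (eta e.2))
  * (f (swap_cfg e.1 e.2 eta) - f eta).

Variables (S : seq V) (ED : seq (V * V)).
Hypotheses (hED : edge_enum E S ED) (fS : depends_only_on S f).

Lemma tasep_gen_seq :
  tasep_gen E o r lam f =
  fun eta => creation_term eta + \sum_(e <- ED) jump_term e eta.
Proof.
have [uED memED] := hED; apply: funext => eta; congr (_ + _).
rewrite (fsbigE ED) //.
- rewrite big_seq_cond [RHS]big_seq; apply: eq_bigl => e.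
  by case eED: (e \in ED) => //=; apply/mem_set; case/memED: eED.
- by move=> e /= /memED [].
move=> [x y] /= exy nxy.
have /norP[xS yS] : ~~ ((x \in S) || (y \in S)).
  by apply: contra nxy => xyS; apply/memED.
suff -> : f (swap_cfg x y eta) = f eta by rewrite subrr mulr0.
apply: fS => v vS; rewrite /swap_cfg.
by rewrite (negbTE (memPn xS v vS)) (negbTE (memPn yS v vS)).
Qed.

Lemma tasep_gen_depends :
  depends_only_on (o :: S ++ unzip1 ED ++ unzip2 ED) (tasep_gen E o r lam f).
Proof.
rewrite tasep_gen_seq => eta eta' eq_eta.
have eq_S v : v \in S -> eta v = eta' v.
  by move=> vS; apply: eq_eta; rewrite in_cons mem_cat vS orbT.
have eq_ends e : e \in ED -> eta e.1 = eta' e.1 /\ eta e.2 = eta' e.2.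
  move=> eED; split; apply: eq_eta; rewrite in_cons !mem_cat.
    by rewrite (map_f fst eED) !orbT.
  by rewrite (map_f snd eED) !orbT.
have eq_f : f eta = f eta' by exact: fS eq_S.
congr (_ + _).
  rewrite /creation_term eq_f (eq_eta o (mem_head _ _)).
  congr (_ * (_ - _)); apply: fS => v vS.
  by rewrite /flip_cfg (eq_eta o (mem_head _ _)) eq_S.
apply: eq_big_seq => e /eq_ends [eq1 eq2]; rewrite /jump_term eq1 eq2 eq_f.
by congr (_ * (_ - _)); apply: fS => v vS; rewrite /swap_cfg eq1 eq2 eq_S.
Qed.

End TasepGenerator.

Section GeneratorAverage.
Variables (R : realType) (V : choiceType) (rho : R) (f : config V -> R).

Definition centered (v : V) (eta : config V) : R := (b2R R (eta v) - rho) * f eta.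

Lemma avg_at_centered v : free_of v f -> avg_at rho v (centered v) = fun _ => 0.
Proof.
move=> fv; apply: funext => eta.
by rewrite /avg_at /centered !set_cfg_at !fv /b2R /=; ring.
Qed.

Lemma avg_at_creation (o : V) (q : R) :
  avg_at rho o (creation_term o (rho * q) f) =
  avg_at rho o (fun eta => q * centered o eta).
Proof.
apply: funext => eta; rewrite /avg_at /creation_term /centered !set_cfg_at.
have -> : flip_cfg o (set_cfg eta o false) = set_cfg eta o true.
  by apply: funext => v; rewrite /flip_cfg /set_cfg eqxx; case: (v == o).
rewrite /b2R /=; ring.
Qed.

Lemma avg_at_jump (r : V -> V -> R) (e : V * V) :
  avg_at rho e.1 (avg_at rho e.2 (jump_term r f e)) =
  avg_at rho e.1 (avg_at rho e.2
    (fun eta => r e.1 e.2 * (centered e.2 eta - centered e.1 eta))).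
Proof.
case: e => x y /=; have [<-|nxy] := eqVneq x y.
  congr (avg_at _ _ (avg_at _ _ _)); apply: funext => eta.
  by rewrite /jump_term /centered /=; case: (eta x); rewrite /b2R /=; ring.
apply: funext => eta; rewrite /avg_at /jump_term /centered /=.
rewrite !set_cfg_at !(set_cfg_other _ _ nxy) !set_cfg_at.
have -> : swap_cfg x y (set_cfg (set_cfg eta x true) y false) =
          set_cfg (set_cfg eta x false) y true.
  apply: funext => v; rewrite /swap_cfg /set_cfg.
  have [->|nvx] := eqVneq v x; first by rewrite (negbTE nxy) eqxx.
  by rewrite (negbTE nxy) eqxx; case: (v == y).
rewrite /b2R /=; ring.
Qed.

Lemma avg_on_creation (N : seq V) (o : V) (q : R) : o \in N ->
  avg_on rho N (creation_term o (rho * q) f) =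
  fun eta => q * avg_on rho N (centered o) eta.
Proof.
move=> oN.
by rewrite -(avg_on_avg_at_mem _ _ oN) avg_at_creation avg_on_avg_at_mem // avg_onZ.
Qed.

Lemma avg_on_jump (N : seq V) (r : V -> V -> R) (e : V * V) :
  e.1 \in N -> e.2 \in N ->
  avg_on rho N (jump_term r f e) =
  fun eta => r e.1 e.2 *
    (avg_on rho N (centered e.2) eta - avg_on rho N (centered e.1) eta).
Proof.
move=> e1N e2N.
rewrite -(avg_on_avg_at_mem _ _ e2N) -(avg_on_avg_at_mem _ _ e1N) avg_at_jump.
by rewrite !avg_on_avg_at_mem // avg_onZ avg_onB.
Qed.

End GeneratorAverage.

Lemma sum_seq_if_eq (R : nmodType) (T : eqType) (U : seq T) (k : T) (a : R) :
  uniq U -> \sum_(v <- U) (if k == v then a else 0) = if k \in U then a else 0.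
Proof.
move=> uU; rewrite -big_mkcond big_const_seq.
rewrite (@eq_count _ _ (pred1 k)) => [|v]; last by rewrite /= eq_sym.
by rewrite count_uniq_mem //; case: (k \in U); rewrite /= ?addr0.
Qed.

Lemma big_seq_fibers (R : nmodType) (I T : eqType) (s : seq I) (U : seq T)
    (k : I -> T) (h : I -> R) :
  uniq U -> (forall i, k i \notin U -> h i = 0) ->
  \sum_(i <- s) h i = \sum_(v <- U) \sum_(i <- s | k i == v) h i.
Proof.
move=> uU h0; under [RHS]eq_bigr do rewrite big_mkcond.
rewrite exchange_big /=; apply: eq_bigr => i _.
by rewrite sum_seq_if_eq //; case: ifPn => // /h0.
Qed.

Section FlowRule.
Variables (R : realType) (V : choiceType) (E : V -> V -> Prop) (o : V).
Variables (r : V -> V -> R) (q : R) (S : seq V) (ED : seq (V * V)).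
Hypotheses (treeE : is_rooted_tree E o) (flowE : flow_rule E o r q).
Hypothesis hED : edge_enum E S ED.

Lemma sum_out_edges v : v \in S ->
  \sum_(e <- ED | e.1 == v) r e.1 e.2 = out_rate E r v.
Proof.
have [uED memED] := hED; move=> vS.
rewrite /out_rate (fsbigE [seq e.2 | e <- ED & e.1 == v]).
- rewrite big_map big_filter_cond [LHS]big_seq_cond [RHS]big_seq_cond.
  apply: eq_big => [e|e /andP[_ /eqP->]] //.
  case eED: (e \in ED) => //=; case: eqP => //= ev.
  by apply/esym/mem_set; case/memED: eED; rewrite ev.
- rewrite map_inj_in_uniq ?filter_uniq // => -[a b] [c d].
  by rewrite !mem_filter /= => /andP[/eqP-> _] /andP[/eqP-> _] ->.
- move=> y /mapP[e]; rewrite mem_filter => /andP[/eqP ev /memED[exy _]] ->.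
  by rewrite /= -ev.
move=> y /= exy /negP[]; apply/mapP; exists (v, y) => //.
by rewrite mem_filter eqxx; apply/memED; rewrite /= vS.
Qed.

Lemma flow_balance v : v \in S ->
  \sum_(e <- ED | e.2 == v) r e.1 e.2 - \sum_(e <- ED | e.1 == v) r e.1 e.2 =
  if v == o then - q else 0.
Proof.
have [uED memED] := hED; have [noo [upar _]] := treeE; have [flow flow_o] := flowE.
move=> vS; rewrite sum_out_edges //; have [->|nvo] := eqVneq v o.
  rewrite flow_o big_seq_cond big1 ?sub0r // => e /andP[/memED[]].
  by move=> + _ /eqP ev; rewrite ev => /noo.
have [p [epv hp]] := upar v (elimN eqP nvo).
have pvED : (p, v) \in ED by apply/memED; rewrite /= vS orbT.
rewrite (flow v p epv) big_seq_cond (eq_bigl (pred1 (p, v))) => [|[a b] /=].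
  by rewrite -big_filter filter_pred1_uniq ?big_seq1 ?subrr.
apply/andP/eqP => [[/memED[eab _] /eqP ebv]|[-> ->]]; last by rewrite eqxx.
by move: eab; rewrite ebv => /hp ->.
Qed.

Lemma flow_divergence (phi : V -> R) : (forall v, v \notin S -> phi v = 0) ->
  \sum_(e <- ED) r e.1 e.2 * (phi e.2 - phi e.1) = - (q * phi o).
Proof.
move=> phi0; rewrite (eq_bigr _ (fun e _ => mulrBr _ _ _)) sumrB.
have fibers (k : V * V -> V) : \sum_(e <- ED) r e.1 e.2 * phi (k e) =
    \sum_(v <- undup S) phi v * \sum_(e <- ED | k e == v) r e.1 e.2.
  have vanish e : k e \notin undup S -> r e.1 e.2 * phi (k e) = 0.
    by rewrite mem_undup => /phi0 ->; rewrite mulr0.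
  rewrite (big_seq_fibers ED (undup_uniq S) vanish).
  apply: eq_bigr => v _; rewrite mulr_sumr.
  by apply: eq_bigr => e /eqP ->; rewrite mulrC.
rewrite (fibers snd) (fibers fst) -sumrB.
rewrite big_seq (eq_bigr (fun v => if o == v then - (q * phi o) else 0)) => [|v].
  rewrite -big_seq sum_seq_if_eq ?undup_uniq // mem_undup.
  by case: ifPn => // /phi0 ->; rewrite mulr0 oppr0.
rewrite mem_undup => vS; rewrite -mulrBr flow_balance // eq_sym.
by case: eqP => [->|_]; rewrite ?mulr0 // mulrN mulrC.
Qed.

End FlowRule.

Lemma avg_on_tasep_gen (R : realType) (V : choiceType) (E : V -> V -> Prop) (o : V)
    (r : V -> V -> R) (q rho : R) (S : seq V) (ED : seq (V * V)) (f : config V -> R) :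
  is_rooted_tree E o -> flow_rule E o r q -> edge_enum E S ED -> depends_only_on S f ->
  avg_on rho (o :: S ++ unzip1 ED ++ unzip2 ED) (tasep_gen E o r (rho * q) f) =
  fun _ => 0.
Proof.
move=> treeE flowE hED fS; set N := o :: _.
have endsN e : e \in ED -> e.1 \in N /\ e.2 \in N.
  by move=> eED; rewrite !(in_cons, mem_cat) (map_f fst eED) (map_f snd eED) !orbT.
pose phi eta v := avg_on rho N (avg_at rho v (centered rho f v)) eta.
have phiE eta v : v \in N -> phi eta v = avg_on rho N (centered rho f v) eta.
  by move=> vN; rewrite /phi avg_on_avg_at_mem.
have phi0 eta v : v \notin S -> phi eta v = 0.
  move=> vS; rewrite /phi avg_at_centered ?avg_on_free //.
  exact: free_of_depends fS vS.
rewrite (tasep_gen_seq _ _ _ hED fS) avg_onD avg_on_sum avg_on_creation ?mem_head //.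
apply: funext => eta; rewrite -phiE ?mem_head //.
rewrite (eq_big_seq (fun e => r e.1 e.2 * (phi eta e.2 - phi eta e.1)))
  => [|e /endsN[e1N e2N]].
  by rewrite (flow_divergence treeE flowE hED (phi0 eta)) addrN.
by rewrite avg_on_jump // !phiE.
Qed.

Unset Implicit Arguments.

Theorem mainTheorem4 (R : realType) (V : choiceType) (E : V -> V -> Prop) (o : V)
  (r : V -> V -> R) (q rho : R) :
  is_rooted_tree E o ->
  locally_finite E ->
  (forall x y, E x y -> 0 < r x y) ->
  (exists C : R, forall x y, E x y -> r x y <= C) ->
  flow_rule E o r q ->
  0 < q ->
  0 < rho < 1 ->
  forall f : config V -> R, cylinder f ->
    cylinder (tasep_gen E o r (rho * q) f) /\
    (forall S : seq V, uniq S -> depends_only_on S (tasep_gen E o r (rho * q) f) ->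
       bern_int rho S (tasep_gen E o r (rho * q) f) = 0).
Proof.
move=> treeE lfE _ _ flowE _ _ f [S fS].
have [ED hED] := exists_edge_enum S treeE lfE.
split.
  by exists (o :: S ++ unzip1 ED ++ unzip2 ED); apply: tasep_gen_depends hED fS.
move=> S' _ GS'; apply: (bern_int_eq0 GS').
exact: avg_on_tasep_gen treeE flowE hED fS.
Qed.
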